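(* In the bialgebra $\text{Ш}_e(\mathbf{k})$, for $k\ge1$, $$\Delta_e(\mathbf{1}^{\otimes(k+1)})=\sum_{i=0}^{k}\mathbf{1}^{\otimes(i+1)}\bar\otimes\mathbf{1}^{\otimes(k+1-i)}+\mu\sum_{i=0}^{k-1}\mathbf{1}^{\otimes(i+1)}\bar\otimes\mathbf{1}^{\otimes(k-i)}.$$
   Context: $\mathbf{k}$ is a commutative unitary ring with identity $\mathbf{1}$, $\lambda,\kappa\in\mathbf{k}$, $\mu$ a root of $t^2-\lambda t+\kappa$. $\text{Ш}_e(\mathbf{k})=\bigoplus_{n\ge0}\mathbf{k}\,\mathbf{1}^{\otimes(n+1)}$ is the free commutative extended Rota-Baxter algebra of weight $(\lambda,\kappa)$ on $\mathbf{k}$, with operator $P_e(\mathbf{1}^{\otimes n})=\mathbf{1}^{\otimes(n+1)}$. $\mathbf{k}$ is regarded as a connected filtered bialgebra with $\Delta_{\mathbf{k}}(x)=x\otimes\mathbf{1}$, $\varepsilon_{\mathbf{k}}=\mathrm{id}$. The coproduct on $\text{Ш}_e(\mathbf{k})$ is given recursively by $\Delta_e(\mathbf{1})=\mathbf{1}\bar\otimes\mathbf{1}$ and, for $k\ge1$, $\Delta_e(\mathbf{1}^{\otimes(k+1)})=P_e(\mathbf{1}^{\otimes k})\bar\otimes\mathbf{1}+(\mathrm{id}\bar\otimes P_e)\Delta_e(\mathbf{1}^{\otimes k})+\mu\mathbf{1}^{\otimes k}\bar\otimes\mathbf{1}$; the counit is $\varepsilon_e(\mathbf{1}^{\otimes(k+1)})=(-\mu)^k\mathbf{1}$.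 $\bar\otimes$ is the tensor product between copies of $\text{Ш}_e(\mathbf{k})$. *)

From HB Require Import structures.
From mathcomp Require Import all_boot all_order all_algebra.
Set Implicit Arguments. Unset Strict Implicit. Unset Printing Implicit Defensive.
Import GRing.Theory.
Local Open Scope ring_scope.

(* Ш_e(k) is the free k-module with basis e_n := 1^{⊗(n+1)}, n >= 0.
   The tensor product Ш_e(k) ⊗ Ш_e(k) is the free k-module with basis
   e_i ⊗ e_j; an element is represented by its coefficient function
   (i, j) |-> coefficient of e_i ⊗ e_j. *)
Definition tensor (R : comPzRingType) := nat -> nat -> R.

Definition btens (R : comPzRingType) (i j : nat) : tensor R :=
  fun a b => if (a == i) && (b == j) then 1 else 0.

Definition tadd (R : comPzRingType) (s t : tensor R) : tensor R :=
  fun a b => s a b + t a b.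

Definition tscale (R : comPzRingType) (c : R) (t : tensor R) : tensor R :=
  fun a b => c * t a b.

(* id ⊗ P_e, with P_e(e_n) = e_{n+1} *)
Definition id_tens_P (R : comPzRingType) (t : tensor R) : tensor R :=
  fun a b => if b is b'.+1 then t a b' else 0.

(* Delta_e mu n = Δ_e(1^{⊗(n+1)}), defined by the recursion
   Δ_e(1) = 1 ⊗ 1,
   Δ_e(1^{⊗(k+1)}) = P_e(1^{⊗k}) ⊗ 1 + (id ⊗ P_e) Δ_e(1^{⊗k}) + μ 1^{⊗k} ⊗ 1. *)
Fixpoint Delta_e (R : comPzRingType) (mu : R) (n : nat) : tensor R :=
  match n with
  | 0 => btens R 0 0
  | k.+1 => tadd (tadd (btens R k.+1 0) (id_tens_P (Delta_e mu k)))
                 (tscale mu (btens R k 0))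
  end.

From mathcomp Require Import all_boot all_order all_algebra zify.
From Stdlib Require Import FunctionalExtensionality.
Import GRing.Theory.
Local Open Scope ring_scope.

(* Both sides are computed coefficientwise: the coefficient of
   [1^{⊗(a+1)} ⊗ 1^{⊗(b+1)}] in Δ_e(1^{⊗(n+1)}) is [a + b = n] + μ [a + b + 1 = n],
   by induction on n, since id ⊗ P_e shifts b by one and the two new terms fill
   the b = 0 column.  Each of the two sums in the statement is the indicator of
   one antidiagonal. *)

Lemma btens_antidiagonal_sum (R : comPzRingType) (n a b : nat) :
  \sum_(i < n.+1) btens R i (n - i) a b = ((a + b)%N == n)%:R.
Proof.
rewrite /btens; case: (ltnP a n.+1) => [lt_an | le_na].
- rewrite (bigD1 (Ordinal lt_an)) //= eqxx /= big1 ?addr0.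
    by case: eqP => eq_b; case: eqP => eq_ab //; exfalso; lia.
  move=> i /eqP ne_ia; case: eqP => // eq_ai.
  by exfalso; apply: ne_ia; apply: val_inj.
- rewrite big1; last by move=> i _; case: eqP => // eq_ai; move: (ltn_ord i); lia.
  by case: eqP => // eq_abn; lia.
Qed.

Lemma Delta_e_coef (R : comPzRingType) (mu : R) (n a b : nat) :
  Delta_e mu n a b = ((a + b)%N == n)%:R + mu * ((a + b).+1 == n)%:R.
Proof.
elim: n a b => [|n IHn] a b /=.
  by rewrite /btens mulr0 addr0; case: a => [|a]; case: b.
rewrite /tadd /id_tens_P /tscale /btens; case: b => [|b].
  by rewrite !addn0 !andbT eqSS addr0; case: (a == n.+1); case: (a == n).
by rewrite andbF add0r IHn andbF mulr0 addr0 addnS.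
Qed.

Lemma Delta_e_coef_sum (R : comPzRingType) (mu : R) (n a b : nat) :
  Delta_e mu n a b =
  \sum_(i < n.+1) btens R i (n - i) a b + mu * \sum_(i < n) btens R i (n - 1 - i) a b.
Proof.
rewrite Delta_e_coef btens_antidiagonal_sum; case: n => [|n].
  by rewrite big_ord0 mulr0.
by rewrite subSS subn0 btens_antidiagonal_sum.
Qed.

Theorem proposition4p12 (R : comPzRingType) (lambda kappa mu : R)
  (hmu : mu ^+ 2 - lambda * mu + kappa = 0) (k : nat) (hk : (1 <= k)%N) :
  Delta_e mu k =
  (fun a b => \sum_(i < k.+1) btens R i (k - i) a b
              + mu * \sum_(i < k) btens R i (k - 1 - i) a b).
Proof.
do 2 (apply: functional_extensionality_dep => ?).
exact: Delta_e_coef_sum.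
Qed.
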